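(* Let $a>0$ and let $L\ge0$ be an integer such that $p_m:=\dfrac12+\dfrac{a}{(m+1)(\log(m+1))^2}<1$ for all $m\geq L+1$, and set $q_m=1-p_m$. Then the quantity \[ \left[1+\frac{p_k}{q_k}+\frac{p_kp_{k-1}}{q_kq_{k-1}}+\cdots+\frac{p_k\cdots p_{L+1}}{q_k\cdots q_{L+1}}\right]\cdot\left[1+\frac{q_{L+1}}{p_{L+1}}+\frac{q_{L+1}q_{L+2}}{p_{L+1}p_{L+2}}+\cdots+\frac{q_{L+1}\cdots q_k}{p_{L+1}\cdots p_k}\right]^{-1} \] stays bounded as $k\to\infty$. Equivalently, for the nearest-neighbour Markov chain $Y_n$ on $\{L,L+1,\dots\}$ stopped at $L$ with up-probabilities $p_m$, the product of the probability that $Y$ started at $L+1$ hits $k+1$ before $L$ and the expected number of upcrossings from $k$ to $k+1$ of $Y$ started at $k$ is bounded uniformly in $k$.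
   Context: Upcrossings from $k$ to $k+1$ of a chain started at $k$: the number of times the chain, after being at $k$, subsequently hits $k+1$ before being stopped at $L$ (counted via alternating hitting times of $k+1$ and $k$). *)

From Stdlib Require Import Reals.
Open Scope R_scope.

Definition pm (a : R) (m : nat) : R :=
  / 2 + a / (INR (m + 1) * (ln (INR (m + 1))) ^ 2).

Definition qm (a : R) (m : nat) : R := 1 - pm a m.

Fixpoint prodR (f : nat -> R) (n : nat) : R :=
  match n with
  | O => 1
  | S n' => prodR f n' * f n'
  end.

Fixpoint sumR (f : nat -> R) (n : nat) : R :=
  match n with
  | O => 0
  | S n' => sumR f n' + f n'
  end.

(* 1 + p_k/q_k + p_k p_{k-1}/(q_k q_{k-1}) + ... + p_k...p_{L+1}/(q_k...q_{L+1})
   : term j (0 <= j <= k-L) is the product over i < j of p_{k-i}/q_{k-i}. *)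
Definition bracket1 (a : R) (L k : nat) : R :=
  sumR (fun j => prodR (fun i => pm a (k - i) / qm a (k - i)) j) (k - L + 1).

(* 1 + q_{L+1}/p_{L+1} + ... + q_{L+1}...q_k/(p_{L+1}...p_k)
   : term j (0 <= j <= k-L) is the product over i < j of q_{L+1+i}/p_{L+1+i}. *)
Definition bracket2 (a : R) (L k : nat) : R :=
  sumR (fun j => prodR (fun i => qm a (L + 1 + i) / pm a (L + 1 + i)) j) (k - L + 1).

(* The ratio of the two brackets is the product r_{L+1} ... r_k of the ratios
   r_m = p_m / q_m, because the first bracket satisfies B1(k) = 1 + r_k B1(k-1)
   while the second satisfies B2(k) = B2(k-1) + 1 / (r_{L+1} ... r_k).
   Writing p_m = 1/2 + e_m, one has r_m <= 1 + 8 e_m <= exp (8 e_m) once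
   e_m <= 1/4, and e_m <= a (1 / log m - 1 / log (m+1)); so the product of the
   r_m telescopes to a bounded quantity. *)
From Stdlib Require Import Reals Lra Lia.
Open Scope R_scope.

Lemma exp_le_compat (x y : R) : x <= y -> exp x <= exp y.
Proof.
  intros [hxy | ->]; [apply Rlt_le, exp_increasing | apply Rle_refl]; assumption.
Qed.

Lemma ln_ge_1_sub_inv (y : R) : 0 < y -> 1 - / y <= ln y.
Proof.
  intros hy. pose proof (exp_ineq1_le (- ln y)) as h.
  rewrite exp_Ropp, exp_ln in h by exact hy. lra.
Qed.

Lemma ln_pos_INR (n : nat) : (2 <= n)%nat -> 0 < ln (INR n).
Proof.
  intros hn. apply le_INR in hn. simpl in hn.
  rewrite <- ln_1. apply ln_increasing; lra.
Qed.

Lemma sumR_ext (f g : nat -> R) (n : nat) :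
  (forall i, (i < n)%nat -> f i = g i) -> sumR f n = sumR g n.
Proof. induction n as [|n IH]; intros h; simpl; [reflexivity|]. rewrite IH, h; auto. Qed.

Lemma prodR_ext (f g : nat -> R) (n : nat) :
  (forall i, (i < n)%nat -> f i = g i) -> prodR f n = prodR g n.
Proof. induction n as [|n IH]; intros h; simpl; [reflexivity|]. rewrite IH, h; auto. Qed.

Lemma sumR_shift (f : nat -> R) (n : nat) :
  sumR f (S n) = f 0%nat + sumR (fun i => f (S i)) n.
Proof. induction n as [|n IH]; simpl in *; [ring|]. rewrite IH. ring. Qed.

Lemma prodR_shift (f : nat -> R) (n : nat) :
  prodR f (S n) = f 0%nat * prodR (fun i => f (S i)) n.
Proof. induction n as [|n IH]; simpl in *; [ring|]. rewrite IH. ring. Qed.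

Lemma sumR_mull (c : R) (f : nat -> R) (n : nat) :
  sumR (fun j => c * f j) n = c * sumR f n.
Proof. induction n as [|n IH]; simpl; [ring|]. rewrite IH. ring. Qed.

Lemma prodR_inv (f : nat -> R) (n : nat) :
  prodR (fun i => / f i) n = / prodR f n.
Proof. induction n as [|n IH]; simpl; [now rewrite Rinv_1|]. rewrite IH, Rinv_mult. ring. Qed.

Section ProductsAboveOne.

Variable f : nat -> R.
Hypothesis f_ge1 : forall i, 1 <= f i.

Lemma prodR_ge1 (n : nat) : 1 <= prodR f n.
Proof.
  induction n as [|n IH]; simpl; [lra|].
  pose proof (f_ge1 n). nra.
Qed.

Lemma prodR_le_mono (m n : nat) : (m <= n)%nat -> prodR f m <= prodR f n.
Proof.
  induction 1 as [|n _ IH]; simpl; [lra|].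
  pose proof (f_ge1 n). pose proof (prodR_ge1 n). nra.
Qed.

Lemma prodR_telescoping_bound (h : nat -> R) (N : nat) :
  (forall i, (N <= i)%nat -> f i <= exp (h i - h (S i))) ->
  (forall i, (N <= i)%nat -> 0 <= h i) ->
  forall n, prodR f n <= prodR f N * exp (h N).
Proof.
  intros hf hh n.
  pose proof (prodR_ge1 N) as hPN.
  assert (hexpN : 1 <= exp (h N)).
  { pose proof (exp_ineq1_le (h N)). pose proof (hh N (le_n N)). lra. }
  destruct (Nat.le_ge_cases n N) as [hn | hn].
  - pose proof (prodR_le_mono n N hn).
    pose proof (Rmult_le_compat_l (prodR f N) 1 (exp (h N)) ltac:(lra) hexpN). lra.
  - assert (htel : prodR f n <= prodR f N * exp (h N - h n)).
    { induction hn as [|n hn IH]; simpl.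
      - rewrite Rminus_diag, exp_0. lra.
      - pose proof (hf n hn). pose proof (f_ge1 n). pose proof (prodR_ge1 n).
        apply Rle_trans with (prodR f N * exp (h N - h n) * exp (h n - h (S n))).
        + apply Rmult_le_compat; lra.
        + rewrite Rmult_assoc, <- exp_plus. right. do 2 f_equal. ring. }
    eapply Rle_trans; [exact htel|].
    apply Rmult_le_compat_l; [lra|].
    apply exp_le_compat. pose proof (hh n hn). lra.
Qed.

End ProductsAboveOne.

Definition drift (a : R) (m : nat) : R :=
  a / (INR (m + 1) * ln (INR (m + 1)) ^ 2).

Definition ratio (a : R) (m : nat) : R := pm a m / qm a m.

Lemma drift_pos (a : R) (m : nat) : 0 < a -> (1 <= m)%nat -> 0 < drift a m.
Proof.
  intros ha hm. unfold drift.
  pose proof (ln_pos_INR (m + 1) ltac:(lia)).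
  assert (0 < INR (m + 1)) by (apply lt_0_INR; lia).
  apply Rdiv_lt_0_compat; [exact ha|].
  apply Rmult_lt_0_compat; [assumption | now apply pow_lt].
Qed.

Lemma drift_le_inv_ln_diff (a : R) (m : nat) : 0 < a -> (2 <= m)%nat ->
  drift a m <= a * (/ ln (INR m) - / ln (INR (m + 1))).
Proof.
  intros ha hm. unfold drift.
  set (x := INR m).
  assert (hx : 2 <= x) by (apply le_INR in hm; unfold x; simpl in hm; lra).
  replace (INR (m + 1)) with (x + 1) by (unfold x; rewrite plus_INR; simpl; ring).
  set (A := ln x). set (B := ln (x + 1)).
  assert (hA : 0 < A) by (unfold A; rewrite <- ln_1; apply ln_increasing; lra).
  assert (hAB : A < B) by (unfold A, B; apply ln_increasing; lra).
  assert (hBA : / (x + 1) <= B - A).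
  { replace (B - A) with (ln ((x + 1) / x))
      by (unfold A, B, Rdiv; rewrite ln_mult, ln_Rinv by (try apply Rinv_0_lt_compat; lra); ring).
    eapply Rle_trans; [|apply ln_ge_1_sub_inv; apply Rdiv_lt_0_compat; lra].
    right. field. lra. }
  replace (/ A - / B) with ((B - A) / (A * B)) by (field; lra).
  apply Rle_trans with (a * (/ (x + 1) / (B * B))).
  - right. simpl. field. lra.
  - apply Rmult_le_compat_l; [lra|]. unfold Rdiv.
    apply Rmult_le_compat; try lra.
    + apply Rlt_le, Rinv_0_lt_compat. lra.
    + apply Rlt_le, Rinv_0_lt_compat. nra.
    + apply Rinv_le_contravar; nra.
Qed.

Lemma drift_eventually_small (a : R) : 0 < a ->
  exists N, (2 <= N)%nat /\ forall m, (N <= m)%nat -> drift a m <= / 4.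
Proof.
  intros ha. destruct (INR_unbounded (exp 1 + 4 * a)) as [N HN].
  exists (N + 2)%nat. split; [lia|]. intros m hm.
  assert (hNx : INR N <= INR (m + 1)) by (apply le_INR; lia).
  pose proof (exp_pos 1).
  set (x := INR (m + 1)) in *.
  assert (hl : 1 < ln x).
  { rewrite <- (ln_exp 1). apply ln_increasing; lra. }
  assert (hden : 0 < x * ln x ^ 2) by (apply Rmult_lt_0_compat; [lra | apply pow_lt; lra]).
  unfold drift. fold x. apply (Rmult_le_reg_r (x * ln x ^ 2)); [exact hden|].
  unfold Rdiv. rewrite Rmult_assoc, Rinv_l, Rmult_1_r by lra.
  simpl. assert (1 <= ln x * ln x) by nra. nra.
Qed.

Lemma half_ratio_le_exp (e : R) : 0 <= e <= / 4 ->
  (/ 2 + e) / (1 - (/ 2 + e)) <= exp (8 * e).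
Proof.
  intros he. eapply Rle_trans; [|apply exp_ineq1_le].
  apply (Rmult_le_reg_r (1 - (/ 2 + e))); [lra|].
  unfold Rdiv. rewrite Rmult_assoc, Rinv_l, Rmult_1_r by lra. nra.
Qed.

Lemma ratio_gt1 (a : R) (m : nat) : 0 < a -> (1 <= m)%nat -> pm a m < 1 ->
  1 < ratio a m.
Proof.
  intros ha hm hp. pose proof (drift_pos a m ha hm).
  unfold ratio, qm in *. unfold pm in *. fold (drift a m) in *.
  apply (Rmult_lt_reg_r (1 - (/ 2 + drift a m))); [lra|].
  unfold Rdiv. rewrite Rmult_assoc, Rinv_l, Rmult_1_r by lra. lra.
Qed.

Section Brackets.

Variables (a : R) (L : nat).

Definition ratio_prod (d : nat) : R := prodR (fun i => ratio a (L + 1 + i)) d.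

Lemma ratio_prod_S (d : nat) : ratio_prod (S d) = ratio_prod d * ratio a (L + S d).
Proof. unfold ratio_prod. simpl. do 2 f_equal. lia. Qed.

Lemma bracket1_S (d : nat) :
  bracket1 a L (L + S d) = 1 + ratio a (L + S d) * bracket1 a L (L + d).
Proof.
  unfold bracket1. replace (L + S d - L + 1)%nat with (S (L + d - L + 1)) by lia.
  rewrite sumR_shift, <- sumR_mull. simpl prodR at 1. f_equal.
  apply sumR_ext. intros j _. rewrite prodR_shift.
  rewrite Nat.sub_0_r. f_equal.
  apply prodR_ext. intros i _. do 2 f_equal; lia.
Qed.

Lemma bracket2_S (d : nat) :
  bracket2 a L (L + S d) = bracket2 a L (L + d) + / ratio_prod (S d).
Proof.
  unfold bracket2. replace (L + S d - L + 1)%nat with (S (L + d - L + 1)) by lia.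
  simpl sumR at 1. f_equal. replace (L + d - L + 1)%nat with (S d) by lia.
  unfold ratio_prod. rewrite <- prodR_inv. apply prodR_ext. intros i _.
  unfold ratio. now rewrite Rinv_div.
Qed.

Hypothesis ratio_posL : forall m, (L + 1 <= m)%nat -> 0 < ratio a m.

Lemma ratio_prod_pos (d : nat) : 0 < ratio_prod d.
Proof.
  induction d as [|d IH]; [unfold ratio_prod; simpl; lra|].
  rewrite ratio_prod_S. apply Rmult_lt_0_compat; [exact IH | apply ratio_posL; lia].
Qed.

Lemma bracket2_pos (d : nat) : 0 < bracket2 a L (L + d).
Proof.
  induction d as [|d IH].
  - unfold bracket2. replace (L + 0 - L + 1)%nat with 1%nat by lia. simpl. lra.
  - rewrite bracket2_S. pose proof (Rinv_0_lt_compat _ (ratio_prod_pos (S d))). lra.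
Qed.

Lemma bracket1_eq_ratio_prod_mul_bracket2 (d : nat) :
  bracket1 a L (L + d) = ratio_prod d * bracket2 a L (L + d).
Proof.
  induction d as [|d IH].
  - unfold bracket1, bracket2, ratio_prod.
    replace (L + 0 - L + 1)%nat with 1%nat by lia. simpl. ring.
  - rewrite bracket1_S, IH, bracket2_S, ratio_prod_S.
    pose proof (ratio_prod_pos d). pose proof (ratio_posL (L + S d) ltac:(lia)).
    field. split; lra.
Qed.

End Brackets.

Lemma ratio_prod_bounded (a : R) (L : nat) : 0 < a ->
  (forall m, (L + 1 <= m)%nat -> pm a m < 1) ->
  exists C, forall d, ratio_prod a L d <= C.
Proof.
  intros ha hp.
  destruct (drift_eventually_small a ha) as [N [hN2 hsmall]].
  set (h := fun i => 8 * a / ln (INR (L + 1 + i))).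
  exists (ratio_prod a L N * exp (h N)). intros d.
  apply prodR_telescoping_bound.
  - intros i. apply Rlt_le, ratio_gt1; [exact ha | lia | apply hp; lia].
  - intros i hi. set (m := (L + 1 + i)%nat).
    pose proof (drift_pos a m ha ltac:(lia)).
    pose proof (drift_le_inv_ln_diff a m ha ltac:(lia)).
    unfold ratio, qm, pm. fold (drift a m).
    eapply Rle_trans; [apply half_ratio_le_exp; split; [lra | apply hsmall; lia]|].
    apply exp_le_compat. unfold h.
    replace (L + 1 + S i)%nat with (m + 1)%nat by lia. fold m.
    unfold Rdiv. lra.
  - intros i hi. unfold h. apply Rlt_le, Rdiv_lt_0_compat; [lra|].
    apply ln_pos_INR. lia.
Qed.

Theorem mainTheorem7 (a : R) (L : nat) (ha : 0 < a)
  (hp : forall m : nat, (L + 1 <= m)%nat -> pm a m < 1) :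
  exists C : R, forall k : nat, (L + 1 <= k)%nat ->
    Rabs (bracket1 a L k * / bracket2 a L k) <= C.
Proof.
  assert (hr : forall m, (L + 1 <= m)%nat -> 0 < ratio a m).
  { intros m hm. pose proof (ratio_gt1 a m ha ltac:(lia) (hp m hm)). lra. }
  destruct (ratio_prod_bounded a L ha hp) as [C hC].
  exists C. intros k hk.
  replace k with (L + (k - L))%nat by lia.
  rewrite bracket1_eq_ratio_prod_mul_bracket2 by exact hr.
  pose proof (bracket2_pos a L hr (k - L)). pose proof (ratio_prod_pos a L hr (k - L)).
  rewrite Rmult_assoc, Rinv_r, Rmult_1_r, Rabs_pos_eq by lra.
  apply hC.
Qed.
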